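(* In each of the four calculi ${\tt Name}$, ${\tt Value}^{\tt LR}$, ${\tt Value}^{\tt RL}$ and ${\tt Need}$ described below, reduction is deterministic: if $E_1,E_2$ are evaluation contexts of the calculus and $r_1,r_2$ are redexes of the calculus (terms matching the left-hand side of one of the two root rules $\mapsto_{\mathtt m}$, $\mapsto_{\mathtt e}$ defining it), then $E_1\langle r_1\rangle=E_2\langle r_2\rangle$ implies $E_1=E_2$ and $r_1=r_2$. Hence every term has at most one way to reduce.
   Context: Terms: $t,u,w ::= x \mid v \mid t\,u \mid t[x\leftarrow u]$, values $v ::= \lambda x.t$. Both $\lambda x.t$ and $t[x\leftarrow u]$ (an explicit substitution) bind $x$ in $t$; terms are taken up to $\alpha$-equivalence and rewriting is capture-avoiding. A context is a term with exactly one occurrence of a hole $\langle\cdot\rangle$; $C\langle t\rangle$ denotes plugging (which may capture variables). Substitution contexts: $L ::= \langle\cdot\rangle \mid L[x\leftarrow t]$. Root rules (for a family of contexts $C$, always assuming $C$ does not capture $x$, i.e. $x\in\mathrm{fv}(C\langle x\rangle)$): dB: $L\langle\lambda x.t\rangle u \mapsto L\langle t[x\leftarrow u]\rangle$; dBv: $L\langle\lambda x.t\rangle L'\langle v\rangle \mapsto L\langle t[x\leftarrow L'\langle v\rangle]\rangle$; ls (w.r.t. $C$): $C\langle x\rangle[x\leftarrow u]\mapsto C\langle u\rangle[x\leftarrow u]$; lsv (w.r.t. $C$): $C\langle x\rangle[x\leftarrow L\langle v\rangle]\mapsto L\langle C\langle v\rangle[x\leftarrow v]\rangle$. The four calculi,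 each given by evaluation contexts, a multiplicative root rule $\mapsto_{\mathtt m}$ and an exponential root rule $\mapsto_{\mathtt e}$: ${\tt Name}$: $H ::= \langle\cdot\rangle \mid H\,t \mid H[x\leftarrow t]$; $\mapsto_{\mathtt m}$ = dB; $\mapsto_{\mathtt e}$ = ls w.r.t. contexts $H$. ${\tt Value}^{\tt LR}$: $V ::= \langle\cdot\rangle \mid V\,t \mid L\langle v\rangle V \mid V[x\leftarrow t]$; $\mapsto_{\mathtt m}$ = dBv; $\mapsto_{\mathtt e}$ = lsv w.r.t. contexts $V$. ${\tt Value}^{\tt RL}$: $S ::= \langle\cdot\rangle \mid S\,L\langle v\rangle \mid t\,S \mid S[x\leftarrow t]$; $\mapsto_{\mathtt m}$ = dBv; $\mapsto_{\mathtt e}$ = lsv w.r.t. contexts $S$. ${\tt Need}$: $N ::= \langle\cdot\rangle \mid N\,t \mid N[x\leftarrow t] \mid N'\langle x\rangle[x\leftarrow N]$; $\mapsto_{\mathtt m}$ = dB; $\mapsto_{\mathtt e}$ = lsv w.r.t. contexts $N$. The reduction relations are $\multimap_{\mathtt m} := E\langle\mapsto_{\mathtt m}\rangle$ and $\multimap_{\mathtt e}:=E\langle\mapsto_{\mathtt e}\rangle$ for $E$ ranging over evaluation contexts of the calculus, and $\multimap:=\multimap_{\mathtt m}\cup\multimap_{\mathtt e}$. *)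

(* Terms are represented with de Bruijn indices, so that terms are
   identified up to alpha-equivalence and plugging of a context may capture. *)

(* t ::= x | \x.t | t u | t[x<-u]
   Lam t binds index 0 in t; ES t u  (= t[x<-u]) binds index 0 in t. *)
Inductive term : Type :=
  | Var : nat -> term
  | Lam : term -> term
  | App : term -> term -> term
  | ES  : term -> term -> term.

Definition is_value (t : term) : Prop := exists b, t = Lam b.

Inductive ctx : Type :=
  | Hole : ctx
  | CLam : ctx -> ctx
  | CAppL : ctx -> term -> ctx
  | CAppR : term -> ctx -> ctx
  | CESL : ctx -> term -> ctx
  | CESR : term -> ctx -> ctx.

Fixpoint plug (C : ctx) (t : term) : term :=
  match C with
  | Hole => t
  | CLam C => Lam (plug C t)
  | CAppL C u => App (plug C t) u
  | CAppR u C => App u (plug C t)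
  | CESL C u => ES (plug C t) u
  | CESR u C => ES u (plug C t)
  end.

Fixpoint depth (C : ctx) : nat :=
  match C with
  | Hole => 0
  | CLam C => S (depth C)
  | CAppL C _ => depth C
  | CAppR _ C => depth C
  | CESL C _ => S (depth C)
  | CESR _ C => depth C
  end.

(* C<x> where x is the variable bound just outside C, i.e. C does not
   capture x: in de Bruijn notation this is index (depth C). *)
Definition plug_bound_var (C : ctx) : term := plug C (Var (depth C)).

Inductive is_L : ctx -> Prop :=
  | L_hole : is_L Hole
  | L_es : forall L t, is_L L -> is_L (CESL L t).

Inductive is_H : ctx -> Prop :=
  | H_hole : is_H Hole
  | H_app : forall H t, is_H H -> is_H (CAppL H t)
  | H_es : forall H t, is_H H -> is_H (CESL H t).

Inductive is_V : ctx -> Prop :=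
  | V_hole : is_V Hole
  | V_appl : forall V t, is_V V -> is_V (CAppL V t)
  | V_appr : forall L v V, is_L L -> is_value v -> is_V V ->
      is_V (CAppR (plug L v) V)
  | V_es : forall V t, is_V V -> is_V (CESL V t).

Inductive is_S : ctx -> Prop :=
  | S_hole : is_S Hole
  | S_appl : forall S L v, is_S S -> is_L L -> is_value v ->
      is_S (CAppL S (plug L v))
  | S_appr : forall t S, is_S S -> is_S (CAppR t S)
  | S_es : forall S t, is_S S -> is_S (CESL S t).

Inductive is_N : ctx -> Prop :=
  | N_hole : is_N Hole
  | N_app : forall N t, is_N N -> is_N (CAppL N t)
  | N_es : forall N t, is_N N -> is_N (CESL N t)
  | N_need : forall N' N, is_N N' -> is_N N ->
      is_N (CESR (plug_bound_var N') N).

Definition redex_dB (r : term) : Prop :=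
  exists L t u, is_L L /\ r = App (plug L (Lam t)) u.

Definition redex_dBv (r : term) : Prop :=
  exists L t L' v, is_L L /\ is_L L' /\ is_value v /\
    r = App (plug L (Lam t)) (plug L' v).

Definition redex_ls (P : ctx -> Prop) (r : term) : Prop :=
  exists C u, P C /\ r = ES (plug_bound_var C) u.

Definition redex_lsv (P : ctx -> Prop) (r : term) : Prop :=
  exists C L v, P C /\ is_L L /\ is_value v /\
    r = ES (plug_bound_var C) (plug L v).

Inductive calculus : Type := Name | ValueLR | ValueRL | Need.

Definition evctx (c : calculus) : ctx -> Prop :=
  match c with
  | Name => is_H
  | ValueLR => is_V
  | ValueRL => is_S
  | Need => is_N
  end.

Definition redex (c : calculus) (r : term) : Prop :=
  match c with
  | Name => redex_dB r \/ redex_ls is_H r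
  | ValueLR => redex_dBv r \/ redex_lsv is_V r
  | ValueRL => redex_dBv r \/ redex_lsv is_S r
  | Need => redex_dB r \/ redex_lsv is_N r
  end.

From Stdlib Require Import Lia.

(* A term [E<h>], with [E] an evaluation context and [h] either a redex or a
   variable not captured by [E], determines [E] and [h]; this is proved by
   induction on the term.  At an application or substitution node both
   subterms can be entered only when one of them is an answer [L<v>] or the
   body [C<x>] of an explicit substitution: an answer contains nothing in
   evaluation position, and in [C<x>] the only thing in evaluation position
   is [x], which is captured by the enclosing substitution. *)

Definition answer (t : term) : Prop :=
  exists L b, is_L L /\ t = plug L (Lam b).

Lemma answer_plug_value L v : is_L L -> is_value v -> answer (plug L v).
Proof. intros HL [b ->]; exists L, b; auto. Qed.

(* Free variables are included because the body [C<x>] of an exponential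
   redex is itself such a decomposition, which the induction must cover. *)
Definition redex_or_free_var (c : calculus) (E : ctx) (h : term) : Prop :=
  redex c h \/ exists k, h = Var k /\ depth E <= k.

Section Calculus.

Variable c : calculus.

Lemma redex_shape r : redex c r ->
  (exists a u, r = App a u /\ answer a) \/
  (exists C u, evctx c C /\ r = ES (plug_bound_var C) u).
Proof.
  destruct c; simpl; intros [Hm | He].
  all: try (destruct Hm as (L & b & u & HL & ->); left; do 2 eexists; split;
              [reflexivity | exists L, b; auto]).
  all: try (destruct Hm as (L & b & L' & v & HL & _ & _ & ->); left; do 2 eexists; split;
              [reflexivity | exists L, b; auto]).
  all: try (destruct He as (C & u & HC & ->); right; eauto).
  all: destruct He as (C & L & v & HC & _ & _ & ->); right; eauto.
Qed.

Lemma redex_not_Var k : ~ redex c (Var k).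
Proof. intros [(? & ? & ? & _) | (? & ? & ? & ?)]%redex_shape; discriminate. Qed.

Lemma redex_not_Lam b : ~ redex c (Lam b).
Proof. intros [(? & ? & ? & _) | (? & ? & ? & ?)]%redex_shape; discriminate. Qed.

Lemma redex_App_answer a u : redex c (App a u) -> answer a.
Proof.
  intros [(? & ? & [= -> _] & Ha) | (? & ? & ? & ?)]%redex_shape; [exact Ha | discriminate].
Qed.

Lemma redex_ES_bound_var a u : redex c (ES a u) ->
  exists C, evctx c C /\ a = plug_bound_var C.
Proof.
  intros [(? & ? & ? & _) | (C & ? & HC & [= -> _])]%redex_shape; [discriminate | eauto].
Qed.

Lemma redex_App_right_answer a u a' E :
  redex c (App a u) -> evctx c (CAppR a' E) -> answer u.
Proof.
  destruct c; simpl; intros Hr HE; inversion HE; subst;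
    destruct Hr as [(? & ? & L1 & v1 & _ & HL1 & Hv1 & [= _ ->]) | (? & ? & ? & ? & ? & ? & ?)];
    solve [discriminate | apply answer_plug_value; auto].
Qed.

Lemma redex_ES_right_answer a u a' E :
  redex c (ES a u) -> evctx c (CESR a' E) -> answer u.
Proof.
  destruct c; simpl; intros Hr HE; inversion HE; subst.
  destruct Hr as [(? & ? & ? & ? & ?) | (? & L1 & v1 & _ & HL1 & Hv1 & [= _ ->])];
    [discriminate | apply answer_plug_value; auto].
Qed.

Lemma evctx_not_CLam E : ~ evctx c (CLam E).
Proof. destruct c; simpl; intros HE; inversion HE. Qed.

Lemma evctx_CAppL E u : evctx c (CAppL E u) -> evctx c E.
Proof. destruct c; simpl; intros HE; inversion HE; auto. Qed.

Lemma evctx_CAppR a E : evctx c (CAppR a E) -> evctx c E.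
Proof. destruct c; simpl; intros HE; inversion HE; auto. Qed.

Lemma evctx_CESL E u : evctx c (CESL E u) -> evctx c E.
Proof. destruct c; simpl; intros HE; inversion HE; auto. Qed.

Lemma evctx_CESR a E : evctx c (CESR a E) -> evctx c E.
Proof. destruct c; simpl; intros HE; inversion HE; auto. Qed.

Lemma evctx_CESR_bound_var a E : evctx c (CESR a E) ->
  exists C, evctx c C /\ a = plug_bound_var C.
Proof. destruct c; simpl; intros HE; inversion HE; eauto. Qed.

Lemma evctx_App_sides E1 u a E2 :
  evctx c (CAppL E1 u) -> evctx c (CAppR a E2) -> answer a \/ answer u.
Proof.
  destruct c; simpl; intros HE1 HE2; inversion HE1; inversion HE2; subst;
    [left | right]; apply answer_plug_value; auto.
Qed.

Lemma redex_or_free_var_CESL E u h :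
  redex_or_free_var c (CESL E u) h -> redex_or_free_var c E h.
Proof.
  intros [Hr | (k & -> & Hk)]; [left; exact Hr |].
  right; exists k; simpl in Hk; split; [reflexivity | lia].
Qed.

Lemma depth_var_redex_or_free_var E : redex_or_free_var c E (Var (depth E)).
Proof. right; exists (depth E); auto. Qed.

Lemma bound_var_not_redex_or_free_var E k :
  k < depth E -> ~ redex_or_free_var c E (Var k).
Proof. intros Hk [Hr | (k' & [= <-] & Hk')]; [exact (redex_not_Var k Hr) | lia]. Qed.

Lemma answer_not_plug t E h :
  answer t -> evctx c E -> redex_or_free_var c E h -> t <> plug E h.
Proof.
  intros (L & b & HL & ->); revert E h.
  induction HL as [|L t HL IH]; intros E h HE Hh Heq.
  - destruct E; simpl in Heq; try discriminate.
    + subst h; destruct Hh as [Hr | (k & Hk & _)]; [exact (redex_not_Lam b Hr) | discriminate].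
    + exact (evctx_not_CLam E HE).
  - destruct E as [| | | | E u | a E]; simpl in Heq; try discriminate.
    + subst h; destruct Hh as [Hr | (k & Hk & _)]; [|discriminate].
      destruct (redex_ES_bound_var _ _ Hr) as (C & HC & HLC).
      exact (IH C _ HC (depth_var_redex_or_free_var C) HLC).
    + injection Heq as Heq _.
      exact (IH E h (evctx_CESL _ _ HE) (redex_or_free_var_CESL _ _ _ Hh) Heq).
    + injection Heq as Heq _.
      destruct (evctx_CESR_bound_var _ _ HE) as (C & HC & ->).
      exact (IH C _ HC (depth_var_redex_or_free_var C) Heq).
Qed.

Definition unique_decomposition (t : term) : Prop :=
  forall E1 h1 E2 h2, evctx c E1 -> evctx c E2 ->
    redex_or_free_var c E1 h1 -> redex_or_free_var c E2 h2 ->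
    plug E1 h1 = t -> plug E2 h2 = t -> E1 = E2 /\ h1 = h2.

Lemma redex_App_not_plug a u E h :
  redex c (App a u) -> evctx c E -> E <> Hole -> redex_or_free_var c E h ->
  App a u <> plug E h.
Proof.
  intros Hr HE Hne Hh Heq.
  destruct E as [|E|E u'|a' E|E u'|a' E]; simpl in Heq; try discriminate.
  - exact (Hne eq_refl).
  - injection Heq as Ha _.
    exact (answer_not_plug _ _ _ (redex_App_answer _ _ Hr) (evctx_CAppL _ _ HE) Hh Ha).
  - injection Heq as _ Hu.
    exact (answer_not_plug _ _ _ (redex_App_right_answer _ _ _ _ Hr HE)
             (evctx_CAppR _ _ HE) Hh Hu).
Qed.

Lemma plug_bound_var_not_plug_CESL a C E u h :
  unique_decomposition a -> evctx c C -> evctx c (CESL E u) ->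
  redex_or_free_var c (CESL E u) h -> a = plug_bound_var C -> a = plug E h -> False.
Proof.
  intros Ha HC HE Hh HaC HaE.
  destruct (Ha C _ E h HC (evctx_CESL _ _ HE) (depth_var_redex_or_free_var C)
              (redex_or_free_var_CESL _ _ _ Hh) (eq_sym HaC) (eq_sym HaE)) as [-> <-].
  exact (bound_var_not_redex_or_free_var (CESL E u) (depth E) (le_n _) Hh).
Qed.

Lemma redex_ES_not_plug a u E h :
  unique_decomposition a ->
  redex c (ES a u) -> evctx c E -> E <> Hole -> redex_or_free_var c E h ->
  ES a u <> plug E h.
Proof.
  intros Ha Hr HE Hne Hh Heq.
  destruct E as [|E|E u'|a' E|E u'|a' E]; simpl in Heq; try discriminate.
  - exact (Hne eq_refl).
  - injection Heq as HaE _.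
    destruct (redex_ES_bound_var _ _ Hr) as (C & HC & HaC).
    exact (plug_bound_var_not_plug_CESL _ _ _ _ _ Ha HC HE Hh HaC HaE).
  - injection Heq as _ Hu.
    exact (answer_not_plug _ _ _ (redex_ES_right_answer _ _ _ _ Hr HE)
             (evctx_CESR _ _ HE) Hh Hu).
Qed.

Lemma unique_decomposition_Var k : unique_decomposition (Var k).
Proof.
  intros E1 h1 E2 h2 _ _ _ _ P1 P2.
  destruct E1, E2; simpl in P1, P2; try discriminate; split; congruence.
Qed.

Lemma unique_decomposition_Lam b : unique_decomposition (Lam b).
Proof.
  intros E1 h1 E2 h2 HE1 HE2 _ _ P1 P2.
  destruct E1, E2; simpl in P1, P2; try discriminate;
    solve [split; congruence | exfalso; eapply evctx_not_CLam; eassumption].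
Qed.

Lemma unique_decomposition_App a u :
  unique_decomposition a -> unique_decomposition u -> unique_decomposition (App a u).
Proof.
  intros Ha Hu E1 h1 E2 h2 HE1 HE2 F1 F2 P1 P2.
  destruct E1 as [|E1|E1 u1|a1 E1|E1 u1|a1 E1];
    destruct E2 as [|E2|E2 u2|a2 E2|E2 u2|a2 E2]; simpl in P1, P2;
    try discriminate; try (exfalso; eapply evctx_not_CLam; eassumption).
  all: try (split; congruence).
  all: try (exfalso; subst h1; destruct F1 as [Hr | (? & ? & _)]; [|discriminate];
            eapply redex_App_not_plug;
              [exact Hr | exact HE2 | discriminate | exact F2 | symmetry; exact P2]).
  all: try (exfalso; subst h2; destruct F2 as [Hr | (? & ? & _)]; [|discriminate];
            eapply redex_App_not_plug;
              [exact Hr | exact HE1 | discriminate | exact F1 | symmetry; exact P1]).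
  - injection P1 as P1 ->; injection P2 as P2 ->.
    destruct (Ha E1 h1 E2 h2 (evctx_CAppL _ _ HE1) (evctx_CAppL _ _ HE2) F1 F2 P1 P2)
      as [-> ->].
    split; reflexivity.
  - injection P1 as P1 ->; injection P2 as -> P2.
    exfalso; destruct (evctx_App_sides _ _ _ _ HE1 HE2) as [Hans | Hans].
    + exact (answer_not_plug _ _ _ Hans (evctx_CAppL _ _ HE1) F1 (eq_sym P1)).
    + exact (answer_not_plug _ _ _ Hans (evctx_CAppR _ _ HE2) F2 (eq_sym P2)).
  - injection P1 as -> P1; injection P2 as P2 ->.
    exfalso; destruct (evctx_App_sides _ _ _ _ HE2 HE1) as [Hans | Hans].
    + exact (answer_not_plug _ _ _ Hans (evctx_CAppL _ _ HE2) F2 (eq_sym P2)).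
    + exact (answer_not_plug _ _ _ Hans (evctx_CAppR _ _ HE1) F1 (eq_sym P1)).
  - injection P1 as -> P1; injection P2 as -> P2.
    destruct (Hu E1 h1 E2 h2 (evctx_CAppR _ _ HE1) (evctx_CAppR _ _ HE2) F1 F2 P1 P2)
      as [-> ->].
    split; reflexivity.
Qed.

Lemma unique_decomposition_ES a u :
  unique_decomposition a -> unique_decomposition u -> unique_decomposition (ES a u).
Proof.
  intros Ha Hu E1 h1 E2 h2 HE1 HE2 F1 F2 P1 P2.
  destruct E1 as [|E1|E1 u1|a1 E1|E1 u1|a1 E1];
    destruct E2 as [|E2|E2 u2|a2 E2|E2 u2|a2 E2]; simpl in P1, P2;
    try discriminate; try (exfalso; eapply evctx_not_CLam; eassumption).
  all: try (split; congruence).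
  all: try (exfalso; subst h1; destruct F1 as [Hr | (? & ? & _)]; [|discriminate];
            eapply redex_ES_not_plug;
              [exact Ha | exact Hr | exact HE2 | discriminate | exact F2 | symmetry; exact P2]).
  all: try (exfalso; subst h2; destruct F2 as [Hr | (? & ? & _)]; [|discriminate];
            eapply redex_ES_not_plug;
              [exact Ha | exact Hr | exact HE1 | discriminate | exact F1 | symmetry; exact P1]).
  - injection P1 as P1 ->; injection P2 as P2 ->.
    destruct (Ha E1 h1 E2 h2 (evctx_CESL _ _ HE1) (evctx_CESL _ _ HE2)
                (redex_or_free_var_CESL _ _ _ F1) (redex_or_free_var_CESL _ _ _ F2) P1 P2)
      as [-> ->].
    split; reflexivity.
  - injection P1 as P1 ->; injection P2 as -> P2.
    destruct (evctx_CESR_bound_var _ _ HE2) as (C & HC & HaC).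
    exfalso; exact (plug_bound_var_not_plug_CESL _ _ _ _ _ Ha HC HE1 F1 HaC (eq_sym P1)).
  - injection P1 as -> P1; injection P2 as P2 ->.
    destruct (evctx_CESR_bound_var _ _ HE1) as (C & HC & HaC).
    exfalso; exact (plug_bound_var_not_plug_CESL _ _ _ _ _ Ha HC HE2 F2 HaC (eq_sym P2)).
  - injection P1 as -> P1; injection P2 as -> P2.
    destruct (Hu E1 h1 E2 h2 (evctx_CESR _ _ HE1) (evctx_CESR _ _ HE2) F1 F2 P1 P2)
      as [-> ->].
    split; reflexivity.
Qed.

Lemma term_unique_decomposition t : unique_decomposition t.
Proof.
  induction t.
  - apply unique_decomposition_Var.
  - apply unique_decomposition_Lam.
  - apply unique_decomposition_App; assumption.
  - apply unique_decomposition_ES; assumption.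
Qed.

End Calculus.

Theorem mainTheorem1 :
  forall (c : calculus) (E1 E2 : ctx) (r1 r2 : term),
    evctx c E1 -> evctx c E2 -> redex c r1 -> redex c r2 ->
    plug E1 r1 = plug E2 r2 -> E1 = E2 /\ r1 = r2.
Proof.
  intros c E1 E2 r1 r2 HE1 HE2 Hr1 Hr2 Heq.
  exact (term_unique_decomposition c _ E1 r1 E2 r2 HE1 HE2
           (or_introl Hr1) (or_introl Hr2) Heq eq_refl).
Qed.
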